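(* Let $(Q,P)$ be a weakly quasi-lattice ordered group and let $\Lambda$ be a $P$-graph with $\mathrm{FA}(\Lambda)\neq\emptyset$. For any $g\in\mathcal{X}(\Lambda)\times Q\times\mathcal{X}(\Lambda)$, the following are equivalent: (1) $g\in\mathcal{G}(\Lambda)$; (2) $g=(\mu\cdot x,\ d(\mu)d(\nu)^{-1},\ \nu\cdot x)$ for some $x\in\mathcal{X}(\Lambda)$ and $\mu,\nu\in\Lambda$ with $s(\mu)=s(\nu)=r(x)$.
   Context: $(Q,P)$ weakly quasi-lattice ordered: $Q$ a discrete group, $P\subseteq Q$ a subsemigroup containing the identity $e$ with $P\cap P^{-1}=\{e\}$, and, with $p\le r$ meaning $pq=r$ for some $q\in P$, any two elements of $P$ with a common upper bound have a least common upper bound. A $P$-graph is a countable small category $\Lambda$ (identities $\Lambda^{(0)}$, range/source $r,s$) with a functor $d:\Lambda\to P$ with unique factorisation (if $d(\lambda)=pq$ there are unique $\mu,\nu$ with $\lambda=\mu\nu$, $d(\mu)=p$, $d(\nu)=q$). Write $\Lambda^m=d^{-1}(m)$, $\lambda\Lambda=\{\lambda\mu: s(\lambda)=r(\mu)\}$, $\mu\preceq\lambda$ iff $\lambda\in\mu\Lambda$. $\mathrm{FA}(\Lambda)$ is the set of $\lambda$ such that for all $\mu\in\lambda\Lambda,\nu\in\Lambda$ there is finite $J\subseteq\Lambda$ with $\mu\Lambda\cap\nu\Lambda=\bigcup_{\kappa\in J}\kappa\Lambda$. A filter is a nonempty hereditary and directed subset of $\Lambda$ (w.r.t. $\preceq$);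 each filter $x$ contains a unique element $r(x)\in\Lambda^{(0)}$, and $d|_x$ is injective. For a filter $x$ with $r(x)=s(\mu)$, $\mu\cdot x=\{\zeta\in\Lambda: \zeta\preceq\mu\gamma\text{ for some }\gamma\in x\}$ (a filter). Path space $\mathcal{X}(\Lambda)=\{x\text{ filter}: x\cap\mathrm{FA}(\Lambda)\neq\emptyset\}$. For $x\in\mathcal{X}(\Lambda)$, $m\in P$ with $x\cap\Lambda^m\neq\emptyset$ (write $x\in\mathrm{dom}(m)$), $x(0,m)$ is the unique element of $x\cap\Lambda^m$ and $x\cdot m=\{\mu: x(0,m)\mu\in x\}$. The path groupoid $\mathcal{G}(\Lambda)$ is the set of $(x,q,y)\in\mathcal{X}(\Lambda)\times Q\times\mathcal{X}(\Lambda)$ for which there are $m,n\in P$ with $q=mn^{-1}$, $x\in\mathrm{dom}(m)$, $y\in\mathrm{dom}(n)$, $x\cdot m=y\cdot n$. *)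

From Stdlib Require Import List.
Set Implicit Arguments.

Record WQLO := {
  Q : Type;
  qmul : Q -> Q -> Q;
  qe : Q;
  qinv : Q -> Q;
  qmul_assoc : forall a b c, qmul a (qmul b c) = qmul (qmul a b) c;
  qmul_e_l : forall a, qmul qe a = a;
  qmul_e_r : forall a, qmul a qe = a;
  qmul_inv_l : forall a, qmul (qinv a) a = qe;
  qmul_inv_r : forall a, qmul a (qinv a) = qe;
  inP : Q -> Prop;
  inP_e : inP qe;
  inP_mul : forall a b, inP a -> inP b -> inP (qmul a b);
  inP_cap_inv : forall a, inP a -> inP (qinv a) -> a = qe;
  wqlo : forall p q, inP p -> inP q ->
    (exists r, inP r /\ (exists a, inP a /\ qmul p a = r)
               /\ (exists b, inP b /\ qmul q b = r)) ->
    exists l, inP l /\ (exists a, inP a /\ qmul p a = l)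
              /\ (exists b, inP b /\ qmul q b = l)
              /\ forall r, inP r ->
                   (exists a, inP a /\ qmul p a = r) ->
                   (exists b, inP b /\ qmul q b = r) ->
                   exists c, inP c /\ qmul l c = r
}.

Definition pleq (G : WQLO) (p r : Q G) : Prop :=
  exists a, inP G a /\ qmul G p a = r.

(** Vertices are the objects [Obj]; the
    identity morphisms [pid v] form Λ^(0).  Composition [comp a b] = ab is
    meaningful when s a = r b. *)
Record PGraph (G : WQLO) := {
  Obj : Type;
  Mor : Type;
  rg : Mor -> Obj;
  sc : Mor -> Obj;
  pid : Obj -> Mor;
  comp : Mor -> Mor -> Mor;
  mor_countable : exists f : Mor -> nat, forall a b, f a = f b -> a = b;
  rg_id : forall v, rg (pid v) = v;
  sc_id : forall v, sc (pid v) = v;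
  rg_comp : forall a b, sc a = rg b -> rg (comp a b) = rg a;
  sc_comp : forall a b, sc a = rg b -> sc (comp a b) = sc b;
  comp_id_l : forall a, comp (pid (rg a)) a = a;
  comp_id_r : forall a, comp a (pid (sc a)) = a;
  comp_assoc : forall a b c, sc a = rg b -> sc b = rg c ->
      comp a (comp b c) = comp (comp a b) c;
  deg : Mor -> Q G;
  deg_P : forall a, inP G (deg a);
  deg_id : forall v, deg (pid v) = qe G;
  deg_comp : forall a b, sc a = rg b -> deg (comp a b) = qmul G (deg a) (deg b);
  unique_fact : forall lam p q, inP G p -> inP G q -> deg lam = qmul G p q ->
      exists mu nu, (sc mu = rg nu /\ lam = comp mu nu /\ deg mu = p /\ deg nu = q)
        /\ forall mu' nu', sc mu' = rg nu' -> lam = comp mu' nu' ->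
             deg mu' = p -> deg nu' = q -> mu' = mu /\ nu' = nu
}.

Unset Implicit Arguments.
Section PG.
Context {G : WQLO}.
Variable L : PGraph G.

Notation Mor := (Mor L).
Notation comp := (comp L).

Definition in_ext (mu lam : Mor) : Prop :=
  exists a, sc L mu = rg L a /\ lam = comp mu a.

Definition preceq (mu lam : Mor) : Prop := in_ext mu lam.

Definition FA (lam : Mor) : Prop :=
  forall mu nu, in_ext lam mu ->
    exists J : list Mor, forall k,
      (in_ext mu k /\ in_ext nu k) <-> (exists k', In k' J /\ in_ext k' k).

Definition mset := Mor -> Prop.

Definition is_filter (x : mset) : Prop :=
  (exists lam, x lam) /\
  (forall lam mu, x lam -> preceq mu lam -> x mu) /\
  (forall lam mu, x lam -> x mu ->
     exists nu, x nu /\ preceq lam nu /\ preceq mu nu).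

Definition act (mu : Mor) (x : mset) : mset :=
  fun z => exists g, x g /\ sc L mu = rg L g /\ preceq z (comp mu g).

Definition path_space (x : mset) : Prop :=
  is_filter x /\ exists lam, x lam /\ FA lam.

Definition in_dom (x : mset) (m : Q G) : Prop :=
  exists lam, x lam /\ deg L lam = m.

(** x·m = {μ : x(0,m) μ ∈ x} ; x(0,m) is the unique element of x of degree m *)
Definition shift (x : mset) (m : Q G) : mset :=
  fun mu => exists lam, x lam /\ deg L lam = m /\ sc L lam = rg L mu /\ x (comp lam mu).

Definition mset_eq (x y : mset) : Prop := forall lam, x lam <-> y lam.

Definition in_groupoid (x : mset) (q : Q G) (y : mset) : Prop :=
  exists m n, inP G m /\ inP G n /\ q = qmul G m (qinv G n) /\
    in_dom x m /\ in_dom y n /\ mset_eq (shift x m) (shift y n).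

End PG.

From Stdlib Require Import List Classical.

(* An arrow (x, m n^-1, y) of G(Λ) says that x and y have the same tail z after
   μ = x(0,m) and ν = y(0,n); then x = μ·z and y = ν·z.  The tail z is again a
   path because FA(Λ) is closed under taking suffixes: by unique factorisation,
   common extensions of μa and μb are exactly the μk with k a common extension
   of a and b.  Conversely (μ·z)·d(μ) = z, since the only element of μ·z of
   degree d(μ) is μ itself. *)

Lemma qmul_cancel_l (G : WQLO) (a b c : Q G) : qmul G a b = qmul G a c -> b = c.
Proof.
  intro H. rewrite <- (qmul_e_l G b), <- (qmul_e_l G c), <- (qmul_inv_l G a).
  rewrite <- !qmul_assoc, H. reflexivity.
Qed.

Lemma list_choice {A B : Type} (R : A -> B -> Prop) (J : list B) :
  (forall b, In b J -> exists a, R a b) ->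
  exists J' : list A, (forall a, In a J' -> exists b, In b J /\ R a b) /\
                      (forall b, In b J -> exists a, In a J' /\ R a b).
Proof.
  induction J as [|b J IH]; intro HR.
  - exists nil. split; intros ? [].
  - destruct IH as [J' [HJ'1 HJ'2]]; [intros; apply HR; right; assumption|].
    destruct (HR b (or_introl eq_refl)) as [a Hab].
    exists (a :: J'). split.
    + intros a' [<-|Ha'].
      * exists b. split; [left|]; auto.
      * destruct (HJ'1 _ Ha') as [b' [Hb' R']]. exists b'. split; [right|]; auto.
    + intros b' [<-|Hb'].
      * exists a. split; [left|]; auto.
      * destruct (HJ'2 _ Hb') as [a' [Ha' R']]. exists a'. split; [right|]; auto.
Qed.

Section PathGroupoid.
Context {G : WQLO} (L : PGraph G).

Notation Mor := (Mor L).
Notation comp := (comp L).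
Notation rg := (rg L).
Notation sc := (sc L).
Notation deg := (deg L).
Notation preceq := (preceq L).

Lemma preceq_refl (l : Mor) : preceq l l.
Proof. exists (pid L (sc l)). rewrite rg_id, comp_id_r. auto. Qed.

Lemma preceq_trans (a b c : Mor) : preceq a b -> preceq b c -> preceq a c.
Proof.
  intros [u [Hu ->]] [v [Hv ->]]. rewrite sc_comp in Hv by exact Hu.
  exists (comp u v). split.
  - rewrite rg_comp; auto.
  - rewrite comp_assoc; auto.
Qed.

Lemma rg_preceq (a b : Mor) : preceq a b -> rg b = rg a.
Proof. intros [u [Hu ->]]. apply rg_comp; auto. Qed.

Lemma preceq_comp (mu a : Mor) : sc mu = rg a -> preceq mu (comp mu a).
Proof. intro Ha. exists a. auto. Qed.

Lemma factorisation_unique (l1 a1 l2 a2 : Mor) :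
  sc l1 = rg a1 -> sc l2 = rg a2 -> comp l1 a1 = comp l2 a2 ->
  deg l1 = deg l2 -> l1 = l2 /\ a1 = a2.
Proof.
  intros H1 H2 E Hd.
  assert (Ha : deg a1 = deg a2).
  { apply (qmul_cancel_l G (deg l1)).
    rewrite <- deg_comp, E, deg_comp, Hd by auto. reflexivity. }
  destruct (unique_fact L (comp l1 a1) (deg l1) (deg a1) (deg_P L _) (deg_P L _)
              (deg_comp L _ _ H1)) as [mu [nu [_ U]]].
  destruct (U l1 a1 H1 eq_refl eq_refl eq_refl) as [-> ->].
  destruct (U l2 a2 H2 E (eq_sym Hd) (eq_sym Ha)) as [-> ->]. auto.
Qed.

Lemma comp_cancel_l (mu a b : Mor) : sc mu = rg a -> sc mu = rg b ->
  comp mu a = comp mu b -> a = b.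
Proof. intros Ha Hb E. exact (proj2 (factorisation_unique _ _ _ _ Ha Hb E eq_refl)). Qed.

Lemma preceq_same_deg (l1 l2 n : Mor) :
  preceq l1 n -> preceq l2 n -> deg l1 = deg l2 -> l1 = l2.
Proof.
  intros [a1 [Ha1 E1]] [a2 [Ha2 E2]] Hd.
  exact (proj1 (factorisation_unique _ _ _ _ Ha1 Ha2 (eq_trans (eq_sym E1) E2) Hd)).
Qed.

Lemma preceq_comp_split (mu a n : Mor) : sc mu = rg a -> preceq (comp mu a) n ->
  exists t, sc mu = rg t /\ n = comp mu t /\ preceq a t.
Proof.
  intros Ha [c [Hc ->]]. rewrite sc_comp in Hc by exact Ha.
  exists (comp a c). split; [|split].
  - rewrite rg_comp; auto.
  - rewrite comp_assoc; auto.
  - exists c. auto.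
Qed.

Lemma preceq_comp_l (mu a k : Mor) : sc mu = rg a -> sc mu = rg k ->
  preceq (comp mu a) (comp mu k) <-> preceq a k.
Proof.
  intros Ha Hk. split.
  - intro H. destruct (preceq_comp_split _ _ _ Ha H) as [t [Ht [E Hat]]].
    rewrite (comp_cancel_l _ _ _ Hk Ht E). exact Hat.
  - intros [c [Hc ->]]. exists c. rewrite sc_comp by exact Ha. split; auto.
    rewrite comp_assoc; auto.
Qed.

Lemma filter_rg (x : mset L) (v : Obj L) (l : Mor) :
  is_filter L x -> x (pid L v) -> x l -> rg l = v.
Proof.
  intros [_ [_ Hdir]] Hv Hl. destruct (Hdir _ _ Hv Hl) as [n [_ [H1 H2]]].
  apply rg_preceq in H1. apply rg_preceq in H2. rewrite rg_id in H1. congruence.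
Qed.

Lemma filter_deg_inj (x : mset L) (l1 l2 : Mor) :
  is_filter L x -> x l1 -> x l2 -> deg l1 = deg l2 -> l1 = l2.
Proof.
  intros [_ [_ Hdir]] H1 H2. destruct (Hdir _ _ H1 H2) as [n [_ [P1 P2]]].
  exact (preceq_same_deg _ _ _ P1 P2).
Qed.

Lemma act_mset_eq (mu : Mor) (z z' : mset L) :
  mset_eq L z z' -> mset_eq L (act L mu z) (act L mu z').
Proof. intros E l. split; intros [g [Hg R]]; exists g; split; auto; apply E; auto. Qed.

Lemma shift_mset_eq (x x' : mset L) (m : Q G) :
  mset_eq L x x' -> mset_eq L (shift L x m) (shift L x' m).
Proof.
  intros E l. split; intros [lam [H1 [H2 [H3 H4]]]];
    exists lam; repeat split; auto; apply E; auto.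
Qed.

Lemma FA_preceq (l n : Mor) : FA L l -> preceq l n -> FA L n.
Proof. intros H Hn a b Ha. apply H. eapply preceq_trans; eauto. Qed.

Lemma FA_suffix (mu e : Mor) : sc mu = rg e -> FA L (comp mu e) -> FA L e.
Proof.
  intros He HF a b Ha.
  assert (Hra : sc mu = rg a) by (rewrite (rg_preceq _ _ Ha); auto).
  destruct (classic (rg b = rg a)) as [Hrb|Hrb].
  2:{ exists nil. intro k. split.
      - intros [Ka Kb]. apply rg_preceq in Ka. apply rg_preceq in Kb. congruence.
      - intros [? [[] _]]. }
  assert (Hrb' : sc mu = rg b) by congruence.
  destruct (HF (comp mu a) (comp mu b)) as [J HJ];
    [apply (preceq_comp_l mu e a); auto|].
  (* Every element of J extends μa, so J = μJ' for some list J'. *)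
  destruct (list_choice (fun k' kk => sc mu = rg k' /\ kk = comp mu k') J)
    as [J' [HJ'1 HJ'2]].
  { intros kk Hkk.
    destruct (proj2 (HJ kk) (ex_intro _ kk (conj Hkk (preceq_refl kk)))) as [Hakk _].
    exact (preceq_trans _ _ _ (preceq_comp _ _ Hra) Hakk). }
  exists J'. intro k. split.
  - intros [Hak Hbk]. assert (Hrk : sc mu = rg k) by (rewrite (rg_preceq _ _ Hak); auto).
    destruct (proj1 (HJ (comp mu k))) as [kk [Hkk Hkkk]].
    { split; apply preceq_comp_l; auto. }
    destruct (HJ'2 _ Hkk) as [k' [Hk' [Hrk' ->]]].
    exists k'. split; auto. apply (preceq_comp_l mu); auto.
  - intros [k' [Hk' Hk'k]]. destruct (HJ'1 _ Hk') as [kk [Hkk [Hrk' ->]]].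
    assert (Hrk : sc mu = rg k) by (rewrite (rg_preceq _ _ Hk'k); auto).
    destruct (proj2 (HJ (comp mu k))) as [Hak Hbk].
    { exists (comp mu k'). split; auto. apply preceq_comp_l; auto. }
    split; apply (preceq_comp_l mu); auto.
Qed.

(* The paper's x·d(μ) when μ = x(0,d(μ)), described without degrees. *)
Definition tail (x : mset L) (mu : Mor) : mset L :=
  fun g => sc mu = rg g /\ x (comp mu g).

Lemma tail_vertex (x : mset L) (mu : Mor) : x mu -> tail x mu (pid L (sc mu)).
Proof. intro Hmu. split; [rewrite rg_id; auto | rewrite comp_id_r; auto]. Qed.

Lemma tail_filter (x : mset L) (mu : Mor) :
  is_filter L x -> x mu -> is_filter L (tail x mu).
Proof.
  intros [_ [Hher Hdir]] Hmu. split; [|split].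
  - exists (pid L (sc mu)). apply tail_vertex; auto.
  - intros g h [Hg Hx] Hhg. pose proof (rg_preceq _ _ Hhg) as Er.
    split; [congruence|]. apply (Hher _ _ Hx). apply preceq_comp_l; auto. congruence.
  - intros g1 g2 [Hg1 Hx1] [Hg2 Hx2].
    destruct (Hdir _ _ Hx1 Hx2) as [n [Hn [H1 H2]]].
    destruct (preceq_comp_split _ _ _ Hg1 H1) as [t [Ht [-> Hg1t]]].
    exists t. split; [split; auto|]. split; auto.
    apply (preceq_comp_l mu); auto.
Qed.

Lemma tail_path_space (x : mset L) (mu : Mor) :
  path_space L x -> x mu -> path_space L (tail x mu).
Proof.
  intros [Hf [l [Hl HFA]]] Hmu. split; [apply tail_filter; auto|].
  destruct Hf as [_ [_ Hdir]]. destruct (Hdir _ _ Hl Hmu) as [n [Hn [Hln [e [He ->]]]]].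
  exists e. split; [split; auto|].
  apply (FA_suffix mu); auto. eapply FA_preceq; eauto.
Qed.

Lemma act_tail (x : mset L) (mu : Mor) :
  is_filter L x -> x mu -> mset_eq L x (act L mu (tail x mu)).
Proof.
  intros [_ [Hher Hdir]] Hmu l. split.
  - intro Hl. destruct (Hdir _ _ Hl Hmu) as [n [Hn [Hln [g [Hg ->]]]]].
    exists g. split; [split|split]; auto.
  - intros [g [[_ Hg] [_ Hlg]]]. eauto.
Qed.

Lemma shift_tail (x : mset L) (mu : Mor) :
  x mu -> (forall l, x l -> deg l = deg mu -> l = mu) ->
  mset_eq L (shift L x (deg mu)) (tail x mu).
Proof.
  intros Hmu Huniq g. split.
  - intros [l [Hl [Hd [Hs Hx]]]]. rewrite (Huniq l Hl Hd) in Hs, Hx. split; auto.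
  - intros [Hs Hx]. exists mu. auto.
Qed.

Lemma shift_tail_filter (x : mset L) (mu : Mor) :
  is_filter L x -> x mu -> mset_eq L (shift L x (deg mu)) (tail x mu).
Proof.
  intros Hf Hmu. apply shift_tail; auto.
  intros l Hl. apply (filter_deg_inj x); auto.
Qed.

Lemma act_self (z : mset L) (mu : Mor) : z (pid L (sc mu)) -> act L mu z mu.
Proof.
  intro Hz. exists (pid L (sc mu)). split; auto. split; [rewrite rg_id; auto|].
  rewrite comp_id_r. apply preceq_refl.
Qed.

Lemma act_deg (z : mset L) (mu l : Mor) : act L mu z l -> deg l = deg mu -> l = mu.
Proof.
  intros [g [_ [Hg Hl]]]. exact (preceq_same_deg _ _ _ Hl (preceq_comp _ _ Hg)).
Qed.

Lemma tail_act (z : mset L) (mu : Mor) :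
  is_filter L z -> z (pid L (sc mu)) -> mset_eq L (tail (act L mu z) mu) z.
Proof.
  intros Hf Hz g. split.
  - intros [Hg [g' [Hg' [Hsg' Hgg']]]]. destruct Hf as [_ [Hher _]].
    apply (Hher _ _ Hg'). apply (preceq_comp_l mu); auto.
  - intro Hg. assert (Hs : sc mu = rg g) by (symmetry; eapply filter_rg; eauto).
    split; auto. exists g. split; auto. split; auto. apply preceq_refl.
Qed.

Lemma shift_act (z : mset L) (mu : Mor) :
  is_filter L z -> z (pid L (sc mu)) -> mset_eq L (shift L (act L mu z) (deg mu)) z.
Proof.
  intros Hf Hz g. rewrite (shift_tail _ _ (act_self _ _ Hz) (act_deg z mu) g).
  apply tail_act; auto.
Qed.

End PathGroupoid.

Theorem proposition5p21 (G : WQLO) (L : PGraph G)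
  (hFA : exists lam, FA L lam)
  (x : mset L) (q : Q G) (y : mset L)
  (hx : path_space L x) (hy : path_space L y) :
  in_groupoid L x q y <->
  exists (z : mset L) (mu nu : Mor L),
    path_space L z /\
    z (pid L (sc L mu)) /\ sc L mu = sc L nu /\
    mset_eq L x (act L mu z) /\
    q = qmul G (deg L mu) (qinv G (deg L nu)) /\
    mset_eq L y (act L nu z).
Proof.
  pose proof (proj1 hx) as Fx. pose proof (proj1 hy) as Fy. split.
  - intros [m [n [_ [_ [-> [[mu [Xmu <-]] [[nu [Ynu <-]] Hsh]]]]]]].
    assert (Etail : mset_eq L (tail L x mu) (tail L y nu)).
    { intro g. rewrite <- (shift_tail_filter L x mu Fx Xmu g),
                       <- (shift_tail_filter L y nu Fy Ynu g).
      apply Hsh. }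
    assert (Hv : tail L x mu (pid L (sc L mu))) by (apply tail_vertex; auto).
    exists (tail L x mu), mu, nu.
    split; [apply tail_path_space; auto|]. split; [exact Hv|]. split.
    { destruct (proj1 (Etail _) Hv) as [Hs _]. rewrite rg_id in Hs. symmetry; exact Hs. }
    split; [apply act_tail; auto|]. split; [reflexivity|].
    intro l. rewrite (act_tail L y nu Fy Ynu l).
    apply act_mset_eq. intro g. symmetry. apply Etail.
  - intros [z [mu [nu [[Fz _] [Hz [Hs [Ex [-> Ey]]]]]]]].
    assert (Hz' : z (pid L (sc L nu))) by (rewrite <- Hs; exact Hz).
    exists (deg L mu), (deg L nu).
    split; [apply deg_P|]. split; [apply deg_P|]. split; [reflexivity|].
    split; [exists mu; split; [apply Ex, act_self|]; auto|].
    split; [exists nu; split; [apply Ey, act_self|]; auto|].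
    intro l. rewrite (shift_mset_eq L _ _ _ Ex l), (shift_mset_eq L _ _ _ Ey l).
    rewrite (shift_act L z mu Fz Hz l), (shift_act L z nu Fz Hz' l). reflexivity.
Qed.
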